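(* Let $G=F\times H$ be a direct product of finite abelian groups, where $H=\bigoplus_{i=1}^n\mathbb Z/p^{r_i}\mathbb Z$. Then for any $a\in\mathcal F(G,K)$: (a) $S_{\Delta_a}=S_{\Delta_{a_*}}\otimes 1_H$, where $a_*\in\mathcal F(F,K)$ is given by $a_*(u')=\sum_{u''\in H}a(u'+u'')$; (b) $\mathrm{CharPoly}_{a,G}=(\mathrm{CharPoly}_{a_*,F})^{|H|}$. Consequently there exists a nonzero $a$-harmonic function on $G$ if and only if there exists a nonzero $a_*$-harmonic function on $F$.
   Context: $K$ is a field of characteristic $p>0$, $\bar K$ its algebraic closure. For a finite abelian group $G$, $\mathcal F(G,K)$ is the space of functions $G\to K$; $(f*a)(g)=\sum_hf(h)a(g-h)$ and $\Delta_af=f*a$. $\mathrm{CharPoly}_{a,G}$ is the characteristic polynomial of $\Delta_a$ on $\mathcal F(G,K)$; $f$ is $a$-harmonic if $f*a=0$. For an endomorphism $A$ of a finite-dimensional $K$-vector space, $A=S_A+N_A$ is its Jordan decomposition over $\bar K$ ($S_A$ semisimple, $N_A$ nilpotent, commuting). $\mathcal F(G,\bar K)$ is identified with $\mathcal F(F,\bar K)\otimes\mathcal F(H,\bar K)$ via $f_1\otimes f_2\mapsto((u',u'')\mapsto f_1(u')f_2(u''))$, and $1_H$ is the identity of $\mathcal F(H,\bar K)$. *)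

From HB Require Import structures.
From mathcomp Require Import all_boot all_order all_algebra.
Set Implicit Arguments. Unset Strict Implicit. Unset Printing Implicit Defensive.
Import GRing.Theory.
Local Open Scope ring_scope.

HB.instance Definition _ (F H : finZmodType) := GRing.Zmodule.on (F * H)%type.

(* Functions G -> K are column vectors indexed by enum_rank; an operator on
   F(G,K) is represented by its matrix in the standard basis of indicators. *)
Definition opmx (R : Type) (T : finType) (k : T -> T -> R) : 'M[R]_#|T| :=
  \matrix_(i, j) k (enum_val i) (enum_val j).

Definition conv_mx (R : nzRingType) (G : finZmodType) (a : G -> R) : 'M[R]_#|G| :=
  opmx (fun g h : G => a (g - h)).

Definition harmonic (R : nzRingType) (G : finZmodType) (a : G -> R) (f : G -> R) :=
  forall g : G, \sum_(h : G) f h * a (g - h) = 0.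

Definition astar (R : nzRingType) (F H : finZmodType) (a : F * H -> R) : F -> R :=
  fun u' => \sum_(u'' : H) a (u', u'').

(* S (x) 1_H, as an operator on F(F x H) = F(F) (x) F(H) *)
Definition tens1 (R : nzRingType) (F H : finZmodType) (S : 'M[R]_#|F|) : 'M[R]_#|{: F * H}| :=
  opmx (fun g h : F * H => S (enum_rank g.1) (enum_rank h.1) * (g.2 == h.2)%:R).

Definition mx_nilpotent (R : nzRingType) n (N : 'M[R]_n) :=
  exists k : nat, iter k (mulmx N) 1%:M = 0.

(* S is the semisimple part of the Jordan decomposition of A (over an
   algebraically closed field: semisimple = diagonalizable). *)
Definition ss_part (L : fieldType) n (A S : 'M[L]_n) :=
  diagonalizable S /\
  exists N : 'M[L]_n, [/\ mx_nilpotent N, S *m N = N *m S & A = S + N].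

From HB Require Import structures.
From mathcomp Require Import all_boot all_order all_algebra all_fingroup cyclic.
Set Implicit Arguments. Unset Strict Implicit. Unset Printing Implicit Defensive.
Import GRing.Theory.
Local Open Scope ring_scope.

(* Let X := Delta_{a_*} (x) 1_H, the convolution by u |-> a_*(u') [u'' = 0]. It
   commutes with Delta_a, and D := Delta_a - X is the convolution by a function whose
   sums over the fibres {u'} x H vanish. Expand a convolution as a combination of
   commuting translations: in characteristic p the power |H| = p^e is additive on
   them and maps the translation by (u', u'') to the one by (|H| u', 0), so summing
   over each fibre first gives D^|H| = 0. A commuting nilpotent perturbation changes
   neither the characteristic polynomial (compare large p-th powers of det(x - X - D)
   and det(x - X)) nor the semisimple part: if X = S + N, then S^Q = X^Q for a large
   p-power Q, so D commutes with S^Q, hence with S, because a diagonalizable S is a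
   polynomial in S^Q (interpolate the inverse of the injective map x |-> x^Q on its
   eigenvalues). Finally S (x) 1_H is diagonalizable whenever S is, and
   charpoly (T (x) 1_H) = (charpoly T)^|H| by a block decomposition. *)

Section FrobeniusPowers.
Variables (V : pzRingType) (p : nat).
Hypotheses (p_pr : prime p) (pV : p%:R = 0 :> V).

Lemma exprDp_comm (x y : V) : GRing.comm x y -> (x + y) ^+ p = x ^+ p + y ^+ p.
Proof.
move=> cxy; have defp := prednK (prime_gt0 p_pr).
rewrite exprDn_comm // big_ord_recr subnn -defp big_ord_recl /= defp.
rewrite subn0 mulr1 mul1r bin0 binn big1 ?addr0 // => i _.
have /dvdnP[m ->] : (p %| 'C(p, bump 0 i))%N.
  by apply: prime_dvd_bin; rewrite //= -{2}defp ltnS (valP i).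
by rewrite -mulr_natl natrM pV mulr0 mul0r.
Qed.

Lemma exprDpX_comm (x y : V) k : GRing.comm x y ->
  (x + y) ^+ (p ^ k) = x ^+ (p ^ k) + y ^+ (p ^ k).
Proof.
move=> cxy; elim: k => [|k IHk]; first by rewrite !expn0 !expr1.
by rewrite expnSr !exprM IHk exprDp_comm //; apply/commrX/commr_sym/commrX/commr_sym.
Qed.

Lemma sumr_exprpX (I : Type) (r : seq I) (P : pred I) (x : I -> V) k :
  (forall i j, GRing.comm (x i) (x j)) ->
  (\sum_(i <- r | P i) x i) ^+ (p ^ k) = \sum_(i <- r | P i) x i ^+ (p ^ k).
Proof.
move=> cx; elim: r => [|i r IHr].
  by rewrite !big_nil expr0n expn_eq0 eqn0Ngt prime_gt0.
rewrite !big_cons; case: (P i) => //.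
by rewrite exprDpX_comm ?IHr //; apply: commr_sum => j _.
Qed.

End FrobeniusPowers.

Lemma exprpX_inj (R : idomainType) p k : prime p -> p%:R = 0 :> R ->
  injective (fun x : R => x ^+ (p ^ k)).
Proof.
move=> p_pr pR x y /= exy.
have := exprDpX_comm p_pr pR k (mulrC (x - y) y).
rewrite subrK exy => /eqP; rewrite eq_sym -subr_eq0 addrK expf_eq0 subr_eq0.
by case/andP=> _ /eqP.
Qed.

Lemma natmx_pchar (R : pzRingType) n p : p%:R = 0 :> R -> p%:R = 0 :> 'M[R]_n.
Proof. by move=> pR; rewrite -scaler_nat pR scale0r. Qed.

Lemma exprn_eq0_leq (R : pzSemiRingType) (x : R) k m :
  (k <= m)%N -> x ^+ k = 0 -> x ^+ m = 0.
Proof. by move=> le_km xk; rewrite -(subnKC le_km) exprD xk mul0r. Qed.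

Lemma opmx_mul (R : pzSemiRingType) (T : finType) (k l : T -> T -> R) :
  opmx k *m opmx l = opmx (fun g h => \sum_x k g x * l x h).
Proof.
apply/matrixP => i j; rewrite !mxE (big_enum_val (A := T)) /=.
by apply: eq_bigr => x _; rewrite !mxE.
Qed.

Lemma scalemx_exprn (R : comNzRingType) n (a : R) (M : 'M[R]_n) k :
  (a *: M) ^+ k = a ^+ k *: M ^+ k.
Proof.
elim: k => [|k IHk]; first by rewrite !expr0 scale1r.
by rewrite !exprS IHk -!mulmxE -scalemxAl -scalemxAr scalerA.
Qed.

Lemma commr_scalemx (R : comNzRingType) n (a b : R) (M N : 'M[R]_n) :
  GRing.comm M N -> GRing.comm (a *: M) (b *: N).
Proof.
rewrite /GRing.comm -!mulmxE => cMN.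
by rewrite -!scalemxAl -!scalemxAr !scalerA cMN mulrC.
Qed.

Lemma det_exprn (R : comNzRingType) n (M : 'M[R]_n) k : \det (M ^+ k) = \det M ^+ k.
Proof.
elim: k => [|k IHk]; first by rewrite !expr0 det1.
by rewrite !exprS -mulmxE det_mulmx IHk.
Qed.

Lemma map_mx_exprn (aR rR : nzRingType) (f : {rmorphism aR -> rR}) n (M : 'M[aR]_n) k :
  map_mx f (M ^+ k) = map_mx f M ^+ k.
Proof.
elim: k => [|k IHk]; first by rewrite !expr0 map_mx1.
by rewrite !exprS -!mulmxE map_mxM IHk.
Qed.

Section Convolution.
Variables (R : comNzRingType) (G : finZmodType).

Definition shift_mx (u : G) : 'M[R]_#|G| := conv_mx (fun g => (g == u)%:R).

Lemma conv_mx_shift (b : G -> R) : conv_mx b = \sum_u b u *: shift_mx u.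
Proof.
apply/matrixP => i j; rewrite summxE (bigD1 (enum_val i - enum_val j)) //=.
rewrite big1 => [|u /negPf neq_u]; rewrite !mxE ?eqxx ?mulr1 ?addr0 //.
by rewrite eq_sym neq_u mulr0.
Qed.

Lemma shift_mxD (u v : G) : shift_mx u *m shift_mx v = shift_mx (u + v).
Proof.
rewrite /shift_mx /conv_mx opmx_mul; apply/matrixP => i j; rewrite !mxE.
set g := enum_val i; set h := enum_val j.
rewrite (bigD1 (g - u)) //= big1 => [|x neq_x]; last first.
  case: eqP => [exu|_]; last by rewrite mul0r.
  by rewrite -exu subKr eqxx in neq_x.
by rewrite subKr eqxx mul1r addr0 addrAC subr_eq [v + u]addrC.
Qed.

Lemma shift_mx0 : shift_mx 0 = 1%:M.
Proof. by apply/matrixP => i j; rewrite !mxE subr_eq0 (inj_eq enum_val_inj). Qed.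

Lemma shift_mxMn (u : G) n : shift_mx u ^+ n = shift_mx (u *+ n).
Proof.
elim: n => [|n IHn]; first by rewrite expr0 mulr0n shift_mx0.
by rewrite exprS IHn -mulmxE shift_mxD mulrS.
Qed.

Lemma conv_mxC (b c : G -> R) : conv_mx b *m conv_mx c = conv_mx c *m conv_mx b.
Proof.
rewrite /conv_mx !opmx_mul; apply/matrixP => i j; rewrite !mxE.
rewrite (reindex_inj (inj_comp (addrI (enum_val i + enum_val j)) oppr_inj)) /=.
apply: eq_bigr => x _; rewrite mulrC; congr (_ * _); congr (_ _).
  by rewrite addrAC addrK.
by rewrite opprB opprD addrCA addNKr.
Qed.

Lemma conv_mxB (b c : G -> R) : conv_mx (fun u => b u - c u) = conv_mx b - conv_mx c.
Proof. by apply/matrixP => i j; rewrite !mxE. Qed.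

End Convolution.

Lemma mulrn_card (G : finZmodType) (u : G) : u *+ #|G| = 0.
Proof. by rewrite -FinRing.zmodXgE -cardsT expg_cardG ?inE. Qed.

Lemma pair_mulrn (F H : finZmodType) (u : F * H) n : u *+ n = (u.1 *+ n, u.2 *+ n).
Proof. by case: u => u1 u2; elim: n => [|n IHn]; rewrite ?mulr0n // !mulrS IHn. Qed.

Section TensorIdentity.
Variables (R : pzRingType) (F T : finType).

(* [tens1] for arbitrary finite types: the induction in [det_tensmx1] removes a point
   from T, which leaves the finite groups. *)
Definition tensmx1 (S : 'M[R]_#|F|) : 'M[R]_#|{: F * T}| :=
  opmx (fun g h : F * T => S (enum_rank g.1) (enum_rank h.1) * (g.2 == h.2)%:R).

Lemma tensmx1_scalar (r : R) : tensmx1 r%:M = r%:M.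
Proof.
apply/matrixP => i j; rewrite !mxE (inj_eq enum_rank_inj) -(inj_eq enum_val_inj).
case: (enum_val i) (enum_val j) => [g1 g2] [h1 h2] /=.
by rewrite xpair_eqE; case: eqP; case: eqP; rewrite ?mulr1 ?mulr0 ?mul0r.
Qed.

Fact tensmx1_is_zmod_morphism : zmod_morphism tensmx1.
Proof. by move=> S S'; apply/matrixP => i j; rewrite !mxE mulrBl. Qed.

HB.instance Definition _ := GRing.isZmodMorphism.Build _ _ tensmx1
  tensmx1_is_zmod_morphism.

Fact tensmx1_is_monoid_morphism : monoid_morphism tensmx1.
Proof.
split=> [|S S']; first exact: tensmx1_scalar.
rewrite -!mulmxE /tensmx1 opmx_mul; apply/matrixP => i j; rewrite !mxE.
set g := enum_val i; set h := enum_val j.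
rewrite (reindex enum_rank) /=; last by apply: onW_bij; exact: enum_rank_bij.
rewrite mulr_suml -(pair_bigA _ (fun x y => S (enum_rank g.1) (enum_rank x) *
  (g.2 == y)%:R * (S' (enum_rank x) (enum_rank h.1) * (y == h.2)%:R))) /=.
apply: eq_bigr => x _; rewrite (bigD1 g.2) //= big1 => [|y neq_y].
  by rewrite eqxx mulr1 addr0 mulrA.
by rewrite eq_sym (negPf neq_y) mulr0 mul0r.
Qed.

HB.instance Definition _ := GRing.isMonoidMorphism.Build _ _ tensmx1
  tensmx1_is_monoid_morphism.

End TensorIdentity.

Lemma tensmx1_conv (R : nzRingType) (F H : finZmodType) (c : F -> R) :
  tensmx1 H (conv_mx c) = conv_mx (fun u : F * H => c u.1 * (u.2 == 0)%:R).
Proof.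
apply/matrixP => i j; rewrite !mxE !enum_rankK subr_eq0.
by case: (enum_val i) (enum_val j) => [g1 g2] [h1 h2].
Qed.

Section Determinants.
Variable R : comNzRingType.

Lemma det_reindex n m (g : 'I_n -> 'I_m) (M : 'M[R]_m) :
  n = m -> injective g -> \det (\matrix_(i, j) M (g i) (g j)) = \det M.
Proof.
move=> enm; case: m / enm in g M * => g_inj; set s := perm g_inj.
have -> : \matrix_(i, j) M (g i) (g j) = row_perm s (col_perm s M).
  by apply/matrixP => i j; rewrite !mxE !permE.
rewrite row_permE col_permE !det_mulmx !det_perm odd_permV.
by rewrite mulrCA -signr_addb addbb mulr1.
Qed.

Lemma det_opmx_inj (T1 T2 : finType) (phi : T1 -> T2) (k : T2 -> T2 -> R) :
  injective phi -> #|T1| = #|T2| ->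
  \det (opmx (fun x y => k (phi x) (phi y))) = \det (opmx k).
Proof.
move=> phi_inj eT; rewrite -(det_reindex (g := enum_rank \o phi \o enum_val) _ eT).
  by congr (\det _); apply/matrixP => i j; rewrite !mxE /= !enum_rankK.
by move=> i j /enum_rank_inj /phi_inj /enum_val_inj.
Qed.

Lemma det_opmx_ublock (T1 T2 : finType) (k : T1 + T2 -> T1 + T2 -> R) :
  (forall x y, k (inr x) (inl y) = 0) ->
  \det (opmx k) = \det (opmx (fun x y => k (inl x) (inl y))) *
                  \det (opmx (fun x y => k (inr x) (inr y))).
Proof.
move=> k_dl.
pose f (i : 'I_(#|T1| + #|T2|)) : T1 + T2 :=
  match split i with inl j => inl (enum_val j) | inr j => inr (enum_val j) end.
have f_inj : injective f.
  move=> i j; rewrite /f -{2}(splitK i) -{2}(splitK j).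
  by case: (split i) => a; case: (split j) => b //= [] /enum_val_inj ->.
rewrite -(det_reindex (g := enum_rank \o f) _ (esym (card_sum T1 T2))); last first.
  by move=> i j /enum_rank_inj /f_inj.
set M := \matrix_(i, j) _; rewrite -[M]submxK.
have fl i : f (lshift #|T2| i) = inl (enum_val i) by rewrite /f (unsplitK (inl i)).
have fr i : f (rshift #|T1| i) = inr (enum_val i) by rewrite /f (unsplitK (inr i)).
have -> : dlsubmx M = 0 by apply/matrixP => i j; rewrite !mxE /= !enum_rankK fl fr.
rewrite det_ublock; congr (_ * _); congr (\det _).
  by apply/matrixP => i j; rewrite !mxE /= !enum_rankK !fl.
by apply/matrixP => i j; rewrite !mxE /= !enum_rankK !fr.
Qed.

Lemma det_tensmx1 (F T : finType) (B : 'M[R]_#|F|) :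
  \det (tensmx1 T B) = \det B ^+ #|T|.
Proof.
move cardT: #|T| => n; elim: n T cardT => [|n IHn] T cardT.
  rewrite expr0 -(det_opmx_inj (phi := @of_void (F * T))) //.
    by move: (opmx _); rewrite card_void => M; rewrite det_mx00.
  by rewrite card_void card_prod cardT muln0.
have [t0 _] : {t0 : T | true}.
  by move: cardT; case: (enum T) (cardE T) => [|t s] -> //; exists t.
pose T' := {t : T | t != t0}.
have cardT' : #|{: T'}| = n by rewrite card_sig cardC1 cardT.
pose phi (x : F + F * T') : F * T :=
  match x with inl y => (y, t0) | inr y => (y.1, val y.2) end.
have phi_inj : injective phi.
  case=> [y|[y1 y2]] [z|[z1 z2]] //= [].
  - by move=> ->.
  - by move=> _ ez; have := valP z2; rewrite /= -ez eqxx.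
  - by move=> _ ey; have := valP y2; rewrite /= ey eqxx.
  - by move=> -> /val_inj ->.
rewrite /tensmx1 -(det_opmx_inj (phi := phi)) //; last first.
  by rewrite card_sum !card_prod cardT' cardT mulnS.
rewrite det_opmx_ublock => [|[y1 y2] z] /=; last by rewrite (negPf (valP y2)) mulr0.
rewrite exprS -(IHn T') //; congr (_ * _).
by congr (\det _); apply/matrixP => i j; rewrite !mxE !enum_valK eqxx mulr1.
Qed.

End Determinants.

Lemma char_poly_tensmx1 (R : comNzRingType) (F T : finType) (M : 'M[R]_#|F|) :
  char_poly (tensmx1 T M) = char_poly M ^+ #|T|.
Proof.
rewrite /char_poly -det_tensmx1; congr (\det _).
apply/matrixP => i j; rewrite !mxE (inj_eq enum_rank_inj) -(inj_eq enum_val_inj).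
case: (enum_val i) (enum_val j) => [g1 g2] [h1 h2] /=.
rewrite xpair_eqE rmorphM /= mulrBl; congr (_ - _); last by case: eqP.
by case: eqP; case: eqP; rewrite /= ?mulr1 ?mulr0 ?mul0r ?mulr0n ?mulr1n.
Qed.

Lemma char_poly_sub_nilpotent (R : idomainType) p n (A X : 'M[R]_n) m :
  p \in [pchar R] -> GRing.comm X A -> (A - X) ^+ m = 0 ->
  char_poly A = char_poly X.
Proof.
move=> pR cXA Dm; rewrite -[A in char_poly A](subrK X) [_ + X]addrC.
have cXD := commrB cXA (commr_refl X); set D := A - X in Dm cXD *.
have p_pr := pcharf_prime pR.
have pP : p%:R = 0 :> {poly R} by rewrite -(rmorph_nat (@polyC R)) (pcharf0 pR) rmorph0.
have DQ : D ^+ (p ^ m) = 0 by apply: exprn_eq0_leq Dm; exact/ltnW/ltn_expl/prime_gt1.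
apply: (exprpX_inj (k := m) p_pr pP); rewrite /char_poly -!det_exprn; congr (\det _).
rewrite /char_poly_mx map_mxD opprD addrA exprDpX_comm //.
- by rewrite exprNn -map_mx_exprn DQ map_mx0 mulr0 addr0.
- exact: natmx_pchar.
- apply/commrN/commr_sym/commrB; rewrite /GRing.comm -!mulmxE.
    by rewrite scalar_mxC.
  by rewrite -!map_mxM !mulmxE cXD.
Qed.

Lemma poly_interpolation (R : fieldType) (s : seq (R * R)) : uniq (unzip1 s) ->
  exists f : {poly R}, forall xy, xy \in s -> f.[xy.1] = xy.2.
Proof.
elim: s => [|[x y] s IHs] /=; first by exists 0.
case/andP=> s'x /IHs[f fs]; pose w := \prod_(z <- unzip1 s) ('X - z%:P).
have wx : w.[x] != 0.
  rewrite horner_prod prodf_seq_neq0; apply/allP => z zs /=.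
  by rewrite hornerXsubC subr_eq0; apply: contraNneq s'x => ->.
exists (f + ((y - f.[x]) / w.[x]) *: w) => -[x' y']; rewrite inE.
case/predU1P=> [[-> ->] | xy_s] /=; first by rewrite hornerD hornerZ mulfVK // addrC subrK.
have wx' : w.[x'] = 0.
  by rewrite horner_prod (big_rem x') ?(map_f fst xy_s) //= hornerXsubC subrr mul0r.
by rewrite hornerD hornerZ wx' mulr0 addr0 (fs _ xy_s).
Qed.

Lemma horner_mx_comp (R : comNzRingType) n (Y : 'M[R]_n.+1) (f q : {poly R}) :
  horner_mx Y (f \Po q) = horner_mx (horner_mx Y q) f.
Proof.
rewrite comp_polyE -[f in RHS]coefK poly_def !linear_sum /=; apply: eq_bigr => i _.
by rewrite !linearZ /= !rmorphXn /= horner_mx_X.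
Qed.

Lemma commr_diagonalizable_exprn (R : fieldType) n (Y B : 'M[R]_n) m :
  injective (fun x : R => x ^+ m) -> diagonalizable Y ->
  GRing.comm B (Y ^+ m) -> GRing.comm B Y.
Proof.
case: n Y B => [|n] Y B m_inj; first by rewrite /GRing.comm !thinmx0.
case/diagonalizableP=> rs rs_uniq mY_dvd cBYm.
have /poly_interpolation[f frs] : uniq (unzip1 [seq (r ^+ m, r) | r <- rs]).
  by rewrite /unzip1 -map_comp map_inj_uniq.
have YE : horner_mx Y (f \Po 'X^m) = Y.
  apply/eqP; rewrite -subr_eq0 -[X in _ - X](horner_mx_X Y) -rmorphB /=.
  apply/eqP/mxminpoly_minP; apply: dvdp_trans mY_dvd _.
  apply: uniq_roots_dvdp; last by rewrite uniq_rootsE.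
  apply/allP => r r_rs; rewrite /root !hornerE horner_comp hornerXn.
  by rewrite (frs (r ^+ m, r)) ?subrr // (map_f (fun r => (r ^+ m, r))).
by rewrite -YE horner_mx_comp rmorphXn /= horner_mx_X; apply: comm_mx_horner.
Qed.

Lemma mx_nilpotentP (R : nzRingType) n (N : 'M[R]_n) :
  mx_nilpotent N <-> exists k, N ^+ k = 0.
Proof.
have iterE k : iter k (mulmx N) 1%:M = N ^+ k.
  by elim: k => [|k IHk] //=; rewrite IHk exprS mulmxE.
by split=> -[k Nk]; exists k; rewrite ?iterE in Nk *.
Qed.

Lemma diagonalizable_prodP (R : fieldType) n (S : 'M[R]_n) :
  diagonalizable S <-> exists2 rs : seq R, uniq rs & \prod_(r <- rs) (S - r%:M) = 0.
Proof.
case: n S => [|n] S.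
  rewrite thinmx0; split=> _; last exact: diagonalizable0.
  by exists [::]; last exact: thinmx0.
have hornerE rs : horner_mx S (\prod_(r <- rs) ('X - r%:P)) = \prod_(r <- rs) (S - r%:M).
  by rewrite rmorph_prod; apply: eq_bigr => r _; rewrite rmorphB /= horner_mx_X horner_mx_C.
split=> [/diagonalizableP[rs rs_uniq /mxminpoly_minP Srs] | [rs rs_uniq Srs]].
  by exists rs; rewrite -?hornerE.
by apply/diagonalizableP; exists rs => //; apply/mxminpoly_minP; rewrite hornerE.
Qed.

Lemma ss_part_tensmx1 (R : fieldType) (F T : finType) (X S : 'M[R]_#|F|) :
  ss_part X S -> ss_part (tensmx1 T X) (tensmx1 T S).
Proof.
case=> /diagonalizable_prodP[rs rs_uniq Srs] [N [/mx_nilpotentP[k Nk] cSN ->]].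
split.
  apply/diagonalizable_prodP; exists rs => //.
  rewrite -(rmorph0 (tensmx1 T)) -Srs rmorph_prod.
  by apply: eq_bigr => r _; rewrite rmorphB /= tensmx1_scalar.
exists (tensmx1 T N); split; last exact: rmorphD.
- by apply/mx_nilpotentP; exists k; rewrite -rmorphXn Nk rmorph0.
- by rewrite !mulmxE -!rmorphM -!mulmxE cSN.
Qed.

Lemma ss_part_sub_nilpotent (R : fieldType) p n (A X S : 'M[R]_n) m :
  p \in [pchar R] -> ss_part X S -> GRing.comm X A -> (A - X) ^+ m = 0 ->
  ss_part A S.
Proof.
move=> pR [dS [N [/mx_nilpotentP[k Nk] cSN eX]]] cXA Dm.
rewrite -[A in ss_part A](subrK X) [_ + X]addrC.
have cXD := commrB cXA (commr_refl X); set D := A - X in Dm cXD *.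
have p_pr := pcharf_prime pR; have pM := natmx_pchar n (pcharf0 pR).
pose Q := (p ^ (k + m))%N.
have leQ j : (j <= k + m)%N -> (j <= Q)%N.
  by move=> le_j; apply: leq_trans le_j (ltnW (ltn_expl _ (prime_gt1 p_pr))).
have NQ : N ^+ Q = 0 by apply: exprn_eq0_leq Nk; rewrite leQ ?leq_addr.
have DQ : D ^+ Q = 0 by apply: exprn_eq0_leq Dm; rewrite leQ ?leq_addl.
have cDS : GRing.comm D S.
  apply: (commr_diagonalizable_exprn (exprpX_inj (k := k + m) p_pr (pcharf0 pR)) dS).
  have -> : S ^+ Q = X ^+ Q by rewrite eX exprDpX_comm // NQ addr0.
  exact/commrX/commr_sym.
have cND : GRing.comm N D.
  have -> : N = X - S by rewrite eX addrC addKr.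
  by apply/commr_sym/commrB; [apply/commr_sym | ].
split=> //; exists (N + D); split.
- by apply/mx_nilpotentP; exists Q; rewrite exprDpX_comm // NQ DQ addr0.
- by rewrite !mulmxE; apply: commrD; [exact: cSN | exact/commr_sym].
- by rewrite [RHS]addrA -eX.
Qed.

Section FibreSums.
Variables (R : comNzRingType) (F H : finZmodType) (b : F * H -> R).

Lemma conv_mx_tens1_astar_comm :
  GRing.comm (tensmx1 H (conv_mx (astar b))) (conv_mx b).
Proof. by rewrite tensmx1_conv /GRing.comm -!mulmxE conv_mxC. Qed.

Lemma conv_mx_sub_tens1_astar_nilpotent p : p \in [pchar R] -> p.-nat #|H| ->
  (conv_mx b - tensmx1 H (conv_mx (astar b))) ^+ #|H| = 0.
Proof.
move=> pR /p_natP[e cardH]; have [p_pr pR0] := (pcharf_prime pR, pcharf0 pR).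
pose c (u : F * H) := b u - astar b u.1 * (u.2 == 0)%:R.
have c_fibre u1 : \sum_(u2 : H) c (u1, u2) = 0.
  rewrite sumrB /= [X in _ - X](bigD1 0) //= eqxx mulr1.
  rewrite [X in _ - (_ + X)]big1 ?addr0 ?subrr // => u2 /negPf->.
  by rewrite mulr0.
have shiftC u v : GRing.comm (c u *: shift_mx R u) (c v *: shift_mx R v).
  by apply: commr_scalemx; rewrite /GRing.comm -!mulmxE !shift_mxD addrC.
rewrite tensmx1_conv -conv_mxB -/c conv_mx_shift cardH.
rewrite (sumr_exprpX p_pr (natmx_pchar _ pR0)) //.
under eq_bigr do rewrite scalemx_exprn shift_mxMn -cardH pair_mulrn mulrn_card.
pose d (u1 : F) (u2 : H) := c (u1, u2) ^+ #|H| *: shift_mx R ((u1 *+ #|H|, 0) : F * H).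
rewrite (eq_bigr (fun u => d u.1 u.2)) => [|[] //]; rewrite -(pair_bigA _ d) /=.
apply: big1 => u1 _; rewrite -scaler_suml cardH -sumr_exprpX //; last by move=> ? ?; apply: mulrC.
by rewrite c_fibre expr0n expn_eq0 eqn0Ngt prime_gt0 // scale0r.
Qed.

End FibreSums.

Lemma root_char_poly0 (R : idomainType) n (M : 'M[R]_n) :
  root (char_poly M) 0 = (\det M == 0).
Proof. by rewrite /root horner_coef0 char_poly_det mulf_eq0 signr_eq0. Qed.

Lemma map_conv_mx (aR rR : nzRingType) (f : {rmorphism aR -> rR}) (G : finZmodType)
    (b : G -> aR) :
  map_mx f (conv_mx b) = conv_mx (f \o b).
Proof. by apply/matrixP => i j; rewrite !mxE. Qed.

Lemma map_conv_mx_astar (aR rR : nzRingType) (f : {rmorphism aR -> rR})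
    (F H : finZmodType) (b : F * H -> aR) :
  map_mx f (conv_mx (astar b)) = conv_mx (astar (f \o b)).
Proof. by apply/matrixP => i j; rewrite !mxE rmorph_sum. Qed.

Lemma harmonic_rootP (R : fieldType) (G : finZmodType) (b : G -> R) :
  (exists f : {ffun G -> R}, f != 0 /\ harmonic b f) <-> root (char_poly (conv_mx b)) 0.
Proof.
pose row_of (f : {ffun G -> R}) : 'rV[R]_#|G| := \row_i f (enum_val i).
pose fun_of (v : 'rV[R]_#|G|) := [ffun g => v 0 (enum_rank g)].
have row_ofK : cancel row_of fun_of.
  by move=> f; apply/ffunP => g; rewrite !ffunE mxE enum_rankK.
have fun_ofK : cancel fun_of row_of.
  by move=> v; apply/rowP => i; rewrite !mxE ffunE enum_valK.
have row_of0 : row_of 0 = 0 by apply/rowP => i; rewrite !mxE ffunE.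
have row_of_eq0 f : (row_of f == 0) = (f == 0) by rewrite -row_of0 (can_eq row_ofK).
have harmonicE (f : {ffun G -> R}) : harmonic b f <-> row_of f *m (conv_mx b)^T = 0.
  have entryE j : (row_of f *m (conv_mx b)^T) 0 j = \sum_h f h * b (enum_val j - h).
    by rewrite !mxE (big_enum_val (A := G)) /=; apply: eq_bigr => i _; rewrite !mxE.
  split=> [fb | /rowP fb g]; first by apply/rowP => j; rewrite entryE fb mxE.
  by have := fb (enum_rank g); rewrite entryE enum_rankK mxE.
rewrite root_char_poly0 -det_tr; split=> [[f [f_nz /harmonicE fb]] | /det0P[v v_nz vb]].
  by apply/det0P; exists (row_of f); rewrite ?row_of_eq0.
by exists (fun_of v); rewrite -row_of_eq0 fun_ofK; split=> //; apply/harmonicE; rewrite fun_ofK.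
Qed.

Theorem proposition1p2 (K : fieldType) (p : nat) (L : closedFieldType)
    (iota : {rmorphism K -> L}) (F H : finZmodType) (a : F * H -> K) :
  p \in [pchar K] -> p.-nat #|H| ->
  (* (a) S_{Delta_a} = S_{Delta_{a_*}} (x) 1_H  (over the algebraic closure) *)
  (forall S : 'M[L]_#|F|,
      ss_part (map_mx iota (conv_mx (astar a))) S ->
      ss_part (map_mx iota (conv_mx a)) (tens1 H S)) /\
  (* (b) CharPoly_{a,G} = (CharPoly_{a_*,F})^|H| *)
  char_poly (conv_mx a) = char_poly (conv_mx (astar a)) ^+ #|H| /\
  (* consequence *)
  ((exists f : {ffun F * H -> K}, f != 0 /\ harmonic a f) <->
   (exists f : {ffun F -> K}, f != 0 /\ harmonic (astar a) f)).
Proof.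
move=> pK pH; have pL := rmorph_pchar iota pK.
have char_polyE : char_poly (conv_mx a) = char_poly (conv_mx (astar a)) ^+ #|H|.
  rewrite -char_poly_tensmx1.
  exact: char_poly_sub_nilpotent pK (conv_mx_tens1_astar_comm a)
    (conv_mx_sub_tens1_astar_nilpotent a pK pH).
split; [|split=> //].
  move=> S; rewrite map_conv_mx_astar map_conv_mx => /(ss_part_tensmx1 H) ssS.
  exact: ss_part_sub_nilpotent pL ssS (conv_mx_tens1_astar_comm _)
    (conv_mx_sub_tens1_astar_nilpotent _ pL pH).
have rootE : root (char_poly (conv_mx a)) 0 = root (char_poly (conv_mx (astar a))) 0.
  by rewrite char_polyE root_exp //; [exact: mulrC | apply/card_gt0P; exists 0].
by split=> /harmonic_rootP root0; apply/harmonic_rootP; rewrite ?rootE // -rootE.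
Qed.
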